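(* Let $\widehat{G}$ be a chordal signed separable bigraph. Suppose that a vertex set $S$ minimally separates components $\widehat{H_1}$ and $\widehat{H_2}$ of $\widehat G-S$. Then $\widehat{H_1}$ or $\widehat{H_2}$ contains an edge which is a signed simplicial edge of $\widehat{G}$.
   Context: A signed graph is a finite simple graph each of whose edges is assigned a sign, positive or negative. A signed bigraph is a signed graph whose underlying graph is bipartite. A bigraph is separable if it contains an induced $2K_2$. A signed graph is positive if all its edges are positive and non-trivial if it has at least one edge. In a bigraph with bipartition $(X,Y)$, a subgraph $H$ is a biclique if every vertex of $V(H)\cap X$ is adjacent to every vertex of $V(H)\cap Y$. For an edge $uv$, $N(uv)=(N(u)\cup N(v))\setminus\{u,v\}$; $uv$ is signed simplicial if $N(uv)$ induces a positive biclique. A signed bigraph $\widehat G$ is chordal if its edges can be ordered $e_1,\dots,e_m$ so that each $e_i$ is signed simplicial in $\widehat G-\{e_1,\dots,e_{i-1}\}$ (edges deleted, vertices kept). For a vertex set $S$ and two distinct non-trivial connected components $H,H'$ of $\widehat G-S$, $S$ minimally separates $H$ and $H'$ if every vertex of $S$ has a neighbour in $H$ and a neighbour in $H'$. *)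

From mathcomp Require Import all_boot.
Set Implicit Arguments. Unset Strict Implicit. Unset Printing Implicit Defensive.

(* A signed bigraph on a finite vertex type T is given by
   - adj : rel T, the (symmetric, irreflexive) adjacency relation,
   - pos : rel T, the sign: an edge xy is positive iff pos x y (symmetric),
   - X : {set T}, one side of the bipartition (X, ~: X). *)

Section SignedBigraph.
Variable T : finType.

Definition simple_graph (adj : rel T) : Prop :=
  (forall x y, adj x y = adj y x) /\ (forall x, ~~ adj x x).

Definition signed_bigraph (adj pos : rel T) (X : {set T}) : Prop :=
  simple_graph adj /\ (forall x y, pos x y = pos y x) /\
  (forall x y, adj x y -> (x \in X) != (y \in X)).

Definition del_edges (adj : rel T) (D : seq (T * T)) : rel T :=
  fun x y => adj x y && ~~ has (fun p => [set p.1; p.2] == [set x; y]) D.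

Definition nbhd_edge (adj : rel T) (u v : T) : {set T} :=
  [set w | (adj u w || adj v w) && (w != u) && (w != v)].

Definition induces_biclique (adj : rel T) (X : {set T}) (A : {set T}) : Prop :=
  forall x y, x \in A -> y \in A -> x \in X -> y \notin X -> adj x y.

Definition induces_positive (adj pos : rel T) (A : {set T}) : Prop :=
  forall x y, x \in A -> y \in A -> adj x y -> pos x y.

Definition signed_simplicial (adj pos : rel T) (X : {set T}) (u v : T) : Prop :=
  induces_biclique adj X (nbhd_edge adj u v) /\
  induces_positive adj pos (nbhd_edge adj u v).

Definition edge_ordering (adj : rel T) (s : seq (T * T)) : Prop :=
  all (fun p => adj p.1 p.2) s /\
  uniq (map (fun p => [set p.1; p.2]) s) /\
  (forall x y, adj x y -> [set x; y] \in map (fun p => [set p.1; p.2]) s).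

Definition chordal_signed (adj pos : rel T) (X : {set T}) : Prop :=
  exists s : seq (T * T), edge_ordering adj s /\
    forall i : 'I_(size s),
      signed_simplicial (del_edges adj (take i s)) pos X
        (tnth (in_tuple s) i).1 (tnth (in_tuple s) i).2.

(* contains an induced 2K_2 *)
Definition separable (adj : rel T) : Prop :=
  exists a b c d : T, [/\ adj a b, adj c d, uniq [:: a; b; c; d] &
    ~~ [|| adj a c, adj a d, adj b c | adj b d]].

Definition del_verts (adj : rel T) (S : {set T}) : rel T :=
  fun x y => [&& adj x y, x \notin S & y \notin S].

Definition component_of (adj : rel T) (S : {set T}) (C : {set T}) : Prop :=
  exists2 x, x \notin S &
    C = [set y | (y \notin S) && connect (del_verts adj S) x y].

Definition nontrivial (adj : rel T) (C : {set T}) : Prop :=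
  exists x y, [/\ x \in C, y \in C & adj x y].

Definition minimally_separates (adj : rel T) (S H1 H2 : {set T}) : Prop :=
  [/\ component_of adj S H1, component_of adj S H2, H1 != H2,
      nontrivial adj H1 /\ nontrivial adj H2 &
      forall s, s \in S ->
        (exists2 h, h \in H1 & adj s h) /\ (exists2 h, h \in H2 & adj s h)].

End SignedBigraph.

From mathcomp Require Import all_boot.

Set Implicit Arguments. Unset Strict Implicit. Unset Printing Implicit Defensive.

(* Let e be the first edge of a signed simplicial elimination ordering that
   meets H1 ∪ H2.  No earlier deletion removed an edge at H1 ∪ H2, so e is
   signed simplicial in a subgraph G' that agrees with G around H1 ∪ H2.
   If e = uv with u ∈ H1 but v ∉ H1, then v ∈ S; a neighbour w of u in H1 and
   a neighbour h of v in H2 both lie in N(uv), on opposite sides of the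
   bipartition, so the biclique condition would join H1 to H2.  Hence e lies
   inside H1 (or H2), where N(uv) and the conditions on it are the same in G'
   and in G. *)

Section Components.
Variables (T : finType) (adj : rel T) (S : {set T}).
Hypothesis adjC : symmetric adj.
Implicit Type C : {set T}.

Lemma del_verts_sym : symmetric (del_verts adj S).
Proof. by move=> x y; rewrite /del_verts adjC; congr (_ && _); exact: andbC. Qed.

Lemma component_notin C x : component_of adj S C -> x \in C -> x \notin S.
Proof. by move=> [x0 _ ->]; rewrite inE => /andP[]. Qed.

Lemma component_closed C x y :
  component_of adj S C -> x \in C -> adj x y -> y \notin S -> y \in C.
Proof.
move=> [x0 _ ->]; rewrite !inE => /andP[xS x0x] xy yS; rewrite yS.
by apply: connect_trans x0x (connect1 _); rewrite /del_verts xy xS yS.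
Qed.

Lemma component_ofE C x : component_of adj S C -> x \in C ->
  C = [set y | (y \notin S) && connect (del_verts adj S) x y].
Proof.
have cC := sym_connect_sym del_verts_sym.
move=> [x0 _ ->]; rewrite inE => /andP[_ x0x].
apply/setP => z; rewrite !inE; congr (_ && _); apply/idP/idP.
  by apply: connect_trans; rewrite cC.
exact: connect_trans.
Qed.

Lemma component_connect C x y : component_of adj S C ->
  x \in C -> y \in C -> connect (del_verts adj S) x y.
Proof. by move=> cC xC; rewrite {1}(component_ofE cC xC) inE => /andP[]. Qed.

Lemma component_eq (C1 C2 : {set T}) x : component_of adj S C1 ->
  component_of adj S C2 -> x \in C1 -> x \in C2 -> C1 = C2.
Proof. by move=> c1 c2 x1 x2; rewrite (component_ofE c1 x1) (component_ofE c2 x2). Qed.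

Lemma components_disjoint (C1 C2 : {set T}) x : component_of adj S C1 ->
  component_of adj S C2 -> C1 != C2 -> x \in C1 -> x \notin C2.
Proof. by move=> c1 c2 /eqP ne12 x1; apply/negP => /(component_eq c1 c2 x1). Qed.

Lemma components_nonadjacent (C1 C2 : {set T}) x y : component_of adj S C1 ->
  component_of adj S C2 -> C1 != C2 -> x \in C1 -> y \in C2 -> ~~ adj x y.
Proof.
move=> c1 c2 ne12 x1 y2; apply/negP => xy.
have y1 := component_closed c1 x1 xy (component_notin c2 y2).
by move: (components_disjoint c1 c2 ne12 y1); rewrite y2.
Qed.

Lemma component_neighbour C u : component_of adj S C -> nontrivial adj C ->
  u \in C -> exists2 w, w \in C & adj u w.
Proof.
move=> cC [x [y [xC yC xy]]] uC.
have [->|ux] := eqVneq u x; first by exists y.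
have /connectP[[|w p] /=] := component_connect cC uC xC => [_ ux'|/andP[uw _] _].
  by rewrite ux' eqxx in ux.
have /and3P[uw' _ wS] := uw.
by exists w; first exact: component_closed cC uC uw' wS.
Qed.

End Components.

Section Simplicial.
Variables (T : finType) (pos : rel T) (X : {set T}).

Lemma nbhd_edgeC (g : rel T) u v : nbhd_edge g u v = nbhd_edge g v u.
Proof. by apply/setP => z; rewrite !inE orbC -!andbA; congr (_ && _); exact: andbC. Qed.

Lemma signed_simplicialC (g : rel T) u v :
  signed_simplicial g pos X u v -> signed_simplicial g pos X v u.
Proof. by rewrite /signed_simplicial nbhd_edgeC. Qed.

Lemma biclique_opposite (g : rel T) (A : {set T}) x y : induces_biclique g X A ->
  x \in A -> y \in A -> (x \in X) != (y \in X) -> g x y || g y x.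
Proof.
move=> bic xA yA; case xX: (x \in X); case yX: (y \in X) => //= _.
  by rewrite bic ?yX.
by rewrite orbC bic ?xX.
Qed.

Lemma signed_simplicial_from_subgraph (adj g : rel T) u v :
  signed_bigraph adj pos X -> subrel g adj -> g u =1 adj u -> g v =1 adj v ->
  signed_simplicial g pos X u v -> signed_simplicial adj pos X u v.
Proof.
move=> [_ [posC bip]] gadj gu gv [bic gpos].
have Ng : nbhd_edge adj u v = nbhd_edge g u v by apply/setP => z; rewrite !inE gu gv.
rewrite /signed_simplicial /induces_biclique /induces_positive Ng.
split=> [x y xN yN xX yX | x y xN yN xy]; first by apply: gadj; apply: bic.
have /orP[gxy|gyx] := biclique_opposite bic xN yN (bip _ _ xy).
  exact: gpos.
by rewrite posC; apply: gpos.
Qed.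

End Simplicial.

Lemma minimally_separatesC (T : finType) (adj : rel T) (S H1 H2 : {set T}) :
  minimally_separates adj S H1 H2 -> minimally_separates adj S H2 H1.
Proof.
move=> [c1 c2 ne12 [nt1 nt2] nbS]; split; rewrite 1?eq_sym //.
by move=> s /nbS[].
Qed.

Section Separator.
Variables (T : finType) (adj pos g : rel T) (X S H1 H2 : {set T}).
Hypotheses (sb : signed_bigraph adj pos X) (sep : minimally_separates adj S H1 H2).
Hypotheses (g_sub : subrel g adj)
  (g_agree : forall x y, (x \in H1 :|: H2) || (y \in H1 :|: H2) -> g x y = adj x y).

Lemma simplicial_edge_inside u v : u \in H1 -> adj u v ->
  induces_biclique g X (nbhd_edge g u v) -> v \in H1.
Proof.
have [[adjC adj_irr] [_ bip]] := sb; have [c1 c2 ne12 [nt1 _] nbS] := sep.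
move=> u1 uv bic; have [vS|vS] := boolP (v \in S); last first.
  exact: component_closed c1 u1 uv vS.
have [w w1 uw] := component_neighbour adjC c1 nt1 u1.
have [_ [h h2 vh]] := nbS v vS.
have wN : w \in nbhd_edge g u v.
  rewrite !inE g_agree ?inE ?u1 // uw /=; apply/andP; split.
    by apply: contraTneq uw => ->; rewrite adj_irr.
  by apply: contraNneq (component_notin c1 w1) => ->.
have hN : h \in nbhd_edge g u v.
  rewrite !inE (@g_agree v h) ?inE ?h2 ?orbT // vh orbT /=; apply/andP; split.
    by apply: contraTneq (h2) => ->; rewrite (components_disjoint adjC c1 c2 ne12 u1).
  by apply: contraNneq (component_notin c2 (h2)) => ->.
have wh : (w \in X) != (h \in X).
  move: (bip _ _ uw) (bip _ _ uv) (bip _ _ vh).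
  by case: (u \in X); case: (w \in X); case: (v \in X); case: (h \in X).
have /negbTE nwh := components_nonadjacent adjC c1 c2 ne12 w1 h2.
by case/orP: (biclique_opposite bic wN hN wh) => /g_sub; rewrite ?(adjC h) nwh.
Qed.

Lemma simplicial_edge_lift u v : u \in H1 -> adj u v ->
  signed_simplicial g pos X u v ->
  exists u v, [/\ u \in H1, v \in H1, adj u v & signed_simplicial adj pos X u v].
Proof.
move=> u1 uv simp; have v1 := simplicial_edge_inside u1 uv simp.1.
exists u, v; split=> //; apply: signed_simplicial_from_subgraph sb g_sub _ _ simp.
  by move=> z; apply: g_agree; rewrite inE u1.
by move=> z; apply: g_agree; rewrite inE v1.
Qed.

End Separator.

Section EliminationOrdering.
Variables (T : finType) (A : {set T}).

Definition touches (q : T * T) := (q.1 \in A) || (q.2 \in A).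

Lemma touches_mem q x : x \in [set q.1; q.2] -> x \in A -> touches q.
Proof. by rewrite !inE /touches => /orP[]/eqP-> ->; rewrite ?orbT. Qed.

Lemma find_touches_lt (adj : rel T) s x y :
  edge_ordering adj s -> adj x y -> x \in A -> find touches s < size s.
Proof.
move=> [_ [_ cover]] /cover/mapP[q qs E] xA; rewrite -has_find; apply/hasP.
by exists q => //; apply: touches_mem xA; rewrite -E !inE eqxx.
Qed.

Lemma del_edges_before_touching (adj : rel T) s x y : (x \in A) || (y \in A) ->
  del_edges adj (take (find touches s) s) x y = adj x y.
Proof.
move=> xyA; rewrite /del_edges; case: (adj x y) => //=.
have prefix_far : ~~ has touches (take (find touches s) s).
  by apply/negP => /find_ltn; rewrite ltnn.
apply/hasPn => q /(hasPn prefix_far); apply: contra => /eqP E.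
by case/orP: xyA; apply: touches_mem; rewrite E !inE eqxx ?orbT.
Qed.

End EliminationOrdering.

Theorem lemma4p3 (T : finType) (adj pos : rel T) (X : {set T})
    (S H1 H2 : {set T}) :
  signed_bigraph adj pos X ->
  chordal_signed adj pos X ->
  separable adj ->
  minimally_separates adj S H1 H2 ->
  (exists u v, [/\ u \in H1, v \in H1, adj u v & signed_simplicial adj pos X u v]) \/
  (exists u v, [/\ u \in H2, v \in H2, adj u v & signed_simplicial adj pos X u v]).
Proof.
move=> sb [s [s_ord s_simp]] _ sep; have [[adjC _] _] := sb.
have [_ _ _ [[x [y [x1 _ xy]]] _] _] := sep.
set A := H1 :|: H2.
have k_lt : find (touches A) s < size s.
  by apply: find_touches_lt s_ord xy _; rewrite inE x1.
set g := del_edges adj (take (find (touches A) s) s).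
have g_sub : subrel g adj by move=> ? ? /andP[].
have g_agree a b : (a \in A) || (b \in A) -> g a b = adj a b.
  exact: del_edges_before_touching.
have := s_simp (Ordinal k_lt); rewrite (tnth_nth (x, y)) /=.
set q := nth _ s _ => q_simp.
have q_touches : touches A q by apply: nth_find; rewrite has_find.
have q_adj : adj q.1 q.2 by have [/all_nthP->] := s_ord.
have [u [v [uA uv u_simp]]] :
    exists u v, [/\ u \in A, adj u v & signed_simplicial g pos X u v].
  case/orP: q_touches => qA; [exists q.1, q.2 | exists q.2, q.1]; first by [].
  by rewrite adjC; split=> //; apply: signed_simplicialC.
case/setUP: uA => [u1|u2]; [left|right].
  exact: (simplicial_edge_lift sb sep g_sub g_agree u1 uv u_simp).
apply: (simplicial_edge_lift sb (minimally_separatesC sep) g_sub _ u2 uv u_simp).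
by move=> ? ?; rewrite setUC; apply: g_agree.
Qed.
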